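(* Let $C$ be the index of a source row/column of the padded incident matrix $\widetilde A$, let $P_{\mathrm{cur}}$ be (a pair of) column indices of $X\in\mathbb{R}^{K\times d}$ holding the positional embedding of row/column $C$, and let $D$ be a target column index. Then: (1) a single transformer layer can simulate reading a row of $\widetilde A$, i.e. $X[:,D]\leftarrow\widetilde A[C,:]$ (as a column); and (2) a single transformer layer can simulate reading a column of $\widetilde A$, i.e. $X[:,D]\leftarrow\widetilde A[:,C]$.
   Context: Conventions: rows/columns indexed from $1$; $X[i,j]$ is the $(i,j)$ entry, $X[:,j]$ the $j$-th column, $\widetilde A[C,:]$ the $C$-th row. $\phi(x)=\max\{x,0\}$ entrywise. Hardmax $\sigma$: row $i$ of $\sigma(\Phi)$ is $\frac{1}{|S_i|}\sum_{k\in S_i}e_k$, $S_i=\{k:\Phi_{ik}=\max_j\Phi_{ij}\}$. Positional encoding: $\widehat\delta>0$ is the nearest representable approximation of the minimum increment angle, $R_{\widehat\delta}=\begin{bmatrix}\cos\widehat\delta&-\sin\widehat\delta\\ \sin\widehat\delta&\cos\widehat\delta\end{bmatrix}$, $p_0=(0,1)^\top$, $p_i=R_{\widehat\delta}^\top p_{i-1}$, position $i$ encoded by $(p_i^{(1)},p_i^{(2)})$. A weighted hypergraph has vertices $v_1,\dots,v_{n_v}$, hyperedges $e_1,\dots,e_{n_e}$ with weights $w(e_j)>0$; its incident matrix $A\in\mathbb{R}^{n_v\times n_e}$ has $A_{ij}=w(e_j)$ if $v_i\in e_j$ and $0$ otherwise; for $K\ge\max\{n_v,n_e\}+1$, the padded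 incident matrix $\widetilde A\in\mathbb{R}^{K\times K}$ has $\widetilde A_{i+1,j+1}=A_{ij}$ and zeros elsewhere. A transformer layer on $X\in\mathbb{R}^{K\times d}$ is $f(X,\widetilde A)=f_{\mathrm{mlp}}(f_{\mathrm{attn}}(X,\widetilde A))$, $f_{\mathrm{attn}}(X,\widetilde A)=\sum_{i\in M_A}\psi^{(i)}(X,\widetilde A)+\sum_{i\in M_{A^\top}}\psi^{(i)}(X,\widetilde A^\top)+\sum_{i\in M}\psi^{(i)}(X,I_K)+X$, $\psi(X,B)=B\,\sigma(XW_QW_K^\top X^\top)XW_V$ ($W_Q,W_K\in\mathbb{R}^{d\times2}$, $W_V\in\mathbb{R}^{d\times d}$), $f_{\mathrm{mlp}}(X)=Z^{(4)}W^{(4)}+X$, $Z^{(1)}=X$, $Z^{(j+1)}=\phi(Z^{(j)}W^{(j)})$ ($j=1,2,3$). Storage convention: scalars in the top row of a column (rest $0$), arrays of length $K-1$ in rows $2,\dots,K$ (top $0$); designated columns $B_{\mathrm{global}}$ (top $1$, rest $0$), $B_{\mathrm{local}}$ (top $0$, rest $1$), positional columns $P_1,P_2$ (array position $i$ holds $p_i^{(1)},p_i^{(2)}$), and scratchpad columns. ''Simulating an operation'' means the layer's weights can be chosen so that applying it to $X$ performs the stated update. *)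

From HB Require Import structures.
From mathcomp Require Import all_boot all_order all_algebra.
From mathcomp Require Import all_classical all_reals all_analysis.
Set Implicit Arguments. Unset Strict Implicit. Unset Printing Implicit Defensive.
Import Order.TTheory GRing.Theory Num.Theory.
Local Open Scope ring_scope.

(* Conventions: all indices are 0-based in Rocq; the paper's row/column 1
   (the "top row") is index 0 here. *)

Section Defs.
Variable R : realType.

Definition relu_mx m n (M : 'M[R]_(m, n)) : 'M[R]_(m, n) :=
  \matrix_(i, j) Num.max (M i j) 0.

Definition argmax_set n (Phi : 'M[R]_n) (i : 'I_n) : {set 'I_n} :=
  [set k | [forall j, Phi i j <= Phi i k]].

Definition hardmax n (Phi : 'M[R]_n) : 'M[R]_n :=
  \matrix_(i, k) (if k \in argmax_set Phi i then (#|argmax_set Phi i|%:R)^-1 else 0).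

Record head (d : nat) := Head {
  WQ : 'M[R]_(d, 2);
  WK : 'M[R]_(d, 2);
  WV : 'M[R]_(d, d) }.

Definition psi K d (h : head d) (X : 'M[R]_(K, d)) (B : 'M[R]_K) : 'M[R]_(K, d) :=
  B *m hardmax (X *m WQ h *m (WK h)^T *m X^T) *m X *m WV h.

Record layer (d : nat) := Layer {
  heads_A  : seq (head d);
  heads_AT : seq (head d);
  heads_I  : seq (head d);
  h1 : nat; h2 : nat; h3 : nat;
  W1 : 'M[R]_(d, h1);
  W2 : 'M[R]_(h1, h2);
  W3 : 'M[R]_(h2, h3);
  W4 : 'M[R]_(h3, d) }.

Definition f_attn K d (L : layer d) (X : 'M[R]_(K, d)) (A : 'M[R]_K) : 'M[R]_(K, d) :=
  \sum_(h <- heads_A L) psi h X A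
  + \sum_(h <- heads_AT L) psi h X A^T
  + \sum_(h <- heads_I L) psi h X 1%:M
  + X.

Definition f_mlp K d (L : layer d) (X : 'M[R]_(K, d)) : 'M[R]_(K, d) :=
  let Z2 := relu_mx (X *m W1 L) in
  let Z3 := relu_mx (Z2 *m W2 L) in
  let Z4 := relu_mx (Z3 *m W3 L) in
  Z4 *m W4 L + X.

Definition layer_apply K d (L : layer d) (X : 'M[R]_(K, d)) (A : 'M[R]_K) :=
  f_mlp L (f_attn L X A).

(* Positional encoding: p_0 = (0,1), p_i = R_delta^T p_{i-1}. *)
Fixpoint pos (delta : R) (i : nat) : R * R :=
  match i with
  | 0 => (0, 1)
  | i'.+1 => let: (a, b) := pos delta i' in
             (cos delta * a + sin delta * b, - sin delta * a + cos delta * b)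
  end.

(* Weighted hypergraph: vertices 'I_nv, hyperedges 'I_ne, incidence relation
   (v \in e_j iff hinc v j), positive weights. *)
Record whypergraph := WHypergraph {
  nv : nat;
  ne : nat;
  hinc : 'I_nv -> 'I_ne -> bool;
  hw : 'I_ne -> R;
  hw_pos : forall j, 0 < hw j }.

Definition incident_mx (H : whypergraph) : 'M[R]_(nv H, ne H) :=
  \matrix_(i, j) (if hinc i j then hw j else 0).

(* padded incident matrix: Atilde[i+1, j+1] = A[i, j] (0-based here), zero elsewhere *)
Definition padded_inc (K : nat) (H : whypergraph) : 'M[R]_K :=
  \matrix_(i < K, j < K)
    match nat_of_ord i, nat_of_ord j with
    | i'.+1, j'.+1 =>
        match (insub i' : option 'I_(nv H)), (insub j' : option 'I_(ne H)) with
        | Some a, Some b => incident_mx H a b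
        | _, _ => 0
        end
    | _, _ => 0
    end.

Definition scalar_col K d (X : 'M[R]_(K, d)) (c : 'I_d) (v : R) :=
  forall i : 'I_K, X i c = if nat_of_ord i == 0%N then v else 0.

Definition global_col K d (X : 'M[R]_(K, d)) (c : 'I_d) := scalar_col X c 1.

Definition local_col K d (X : 'M[R]_(K, d)) (c : 'I_d) :=
  forall i : 'I_K, X i c = if nat_of_ord i == 0%N then 0 else 1.

(* array position i (1 <= i <= K-1) sits in row i (0-based) *)
Definition pos_cols K d (delta : R) (X : 'M[R]_(K, d)) (P1 P2 : 'I_d) :=
  forall i : 'I_K,
    X i P1 = (if nat_of_ord i == 0%N then 0 else (pos delta i).1) /\
    X i P2 = (if nat_of_ord i == 0%N then 0 else (pos delta i).2).

Definition set_col K d (X : 'M[R]_(K, d)) (D : 'I_d) (v : 'I_K -> R) : 'M[R]_(K, d) :=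
  \matrix_(i, j) (if j == D then v i else X i j).

End Defs.

From Pilot Require Import Defs.
From HB Require Import structures.
From mathcomp Require Import all_boot all_order all_algebra.
From mathcomp Require Import all_classical all_reals all_analysis.
From mathcomp Require Import ring lra.
Import Order.TTheory GRing.Theory Num.Theory.
Local Open Scope ring_scope.

(* The positions p_j = (sin jδ, cos jδ) are distinct points of the unit circle
   because (K-1)δ < 2π, so p_k·p_j = cos((k-j)δ) is 1 for j = k and < 1
   otherwise.  A head with queries and keys p_j thus attends from every row to
   itself; with value -X[:,D] it erases column D.  A second head keeps the
   queries p_k but moves the key of the top row to p_C: row C then attends
   equally to rows 0 and C, every other row k > 0 only to itself, and the
   value 2·B_global turns this into the indicator of C in column D.  Left
   multiplication by Ã (resp. Ã^T), whose first column vanishes, writes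
   Ã[:,C] (resp. Ã[C,:]) there.  The MLP is disabled by zero hidden widths. *)

Section Trigonometry.
Context {R : realType}.

Lemma pos_sin_cos (delta : R) (i : nat) :
  pos delta i = (sin (i%:R * delta), cos (i%:R * delta)).
Proof.
elim: i => [|i IH] /=; first by rewrite mul0r sin0 cos0.
by rewrite IH -addn1 natrD mulrDl mul1r sinD cosD; congr pair; ring.
Qed.

Lemma sin_cos_dot (x y : R) : sin x * sin y + cos x * cos y = cos (x - y).
Proof. by rewrite cosB addrC. Qed.

Lemma cos_lt1 (x : R) : 0 < x -> x < 2 * pi -> cos x < 1.
Proof.
move=> x_gt0 x_lt2pi.
have -> : x = (x / 2) *+ 2 by rewrite -mulr_natr mulfVK // pnatr_eq0.
rewrite cos_mulr2n cos2sin2.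
have : 0 < sin (x / 2) ^+ 2.
  by rewrite exprn_gt0 // sin_gt0_pi //; apply/andP; split; lra.
lra.
Qed.

Lemma cos_natmulB_lt1 (K : nat) (delta : R) (a b : nat) :
  0 < delta -> K.-1%:R * delta < 2 * pi -> (a < K)%N -> (b < K)%N -> a != b ->
  cos (a%:R * delta - b%:R * delta) < 1.
Proof.
move=> delta_gt0 K_delta_lt.
wlog lt_ba : a b / (b < a)%N.
  move=> W aK bK ne_ab; case: (ltngtP a b) => [lt_ab|lt_ba|eq_ab].
  - by rewrite -cosN opprB; apply: W; rewrite // eq_sym.
  - exact: W.
  - by rewrite eq_ab eqxx in ne_ab.
move=> aK _ _.
rewrite -mulrBl -natrB; last exact: ltnW.
apply: cos_lt1; first by rewrite mulr_gt0 // ltr0n subn_gt0.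
apply: le_lt_trans K_delta_lt; rewrite ler_pM2r // ler_nat.
by apply: leq_trans (leq_subr b a) _; rewrite -ltnS (ltn_predK aK).
Qed.

End Trigonometry.

Section MatrixEntries.
Context {R : pzRingType}.

Lemma addmxE {m n : nat} (A B : 'M[R]_(m, n)) i j : (A + B) i j = A i j + B i j.
Proof. by rewrite mxE. Qed.

Lemma mulmx_deltaE {m n p : nat} (Y : 'M[R]_(m, n)) (i : 'I_n) (j : 'I_p) k a :
  (Y *m delta_mx i j) k a = if a == j then Y k i else 0.
Proof.
rewrite mxE (bigD1 i) //= mxE (eqxx i) /= big1 ?addr0 => [|c /negbTE nci].
  by case: eqP; rewrite ?mulr1 ?mulr0.
by rewrite mxE nci mulr0.
Qed.

Lemma mulmx_trmx2E {m : nat} (Y Z : 'M[R]_(m, 2)) k j :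
  (Y *m Z^T) k j = Y k 0 * Z j 0 + Y k 1 * Z j 1.
Proof.
rewrite mxE !big_ord_recl big_ord0 addr0 !mxE.
by congr (_ + _); congr (Y k _ * Z j _); apply: val_inj.
Qed.

End MatrixEntries.

Section Hardmax.
Context {R : realType}.

Lemma hardmax_rowE {n : nat} (Phi : 'M[R]_n) i (S : {set 'I_n}) m :
  S != finset.set0 -> (forall j, j \in S -> Phi i j = m) ->
  (forall j, j \notin S -> Phi i j < m) ->
  forall k, hardmax Phi i k = if k \in S then #|S|%:R^-1 else 0.
Proof.
move=> /set0Pn [s sS] Phi_S Phi_notS.
suff argmaxE : argmax_set Phi i = S by move=> k; rewrite mxE argmaxE.
apply/setP => j; rewrite inE; case: (boolP (j \in S)) => jS.
  apply/forallP => l; rewrite (Phi_S _ jS).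
  by case: (boolP (l \in S)) => lS; [rewrite (Phi_S _ lS) | exact/ltW/Phi_notS].
apply/negP => /forallP /(_ s); rewrite (Phi_S _ sS).
by rewrite leNgt Phi_notS.
Qed.

Lemma hardmax_diag_max {n : nat} (Phi : 'M[R]_n) :
  (forall i j, i != j -> Phi i j < Phi i i) -> hardmax Phi = 1%:M.
Proof.
move=> Phi_max; apply/matrixP => i k.
rewrite (@hardmax_rowE _ _ i [set i]%SET (Phi i i)).
- by rewrite cards1 invr1 finset.in_set1 mxE eq_sym; case: eqP.
- by apply/set0Pn; exists i; rewrite finset.in_set1.
- by move=> j; rewrite finset.in_set1 => /eqP ->.
- by move=> j; rewrite finset.in_set1 eq_sym; apply: Phi_max.
Qed.

End Hardmax.

Section Layers.
Context {R : realType}.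

Definition attn_layer {d : nat} (hs_A hs_AT hs_I : seq (Defs.head R d)) : layer R d :=
  Layer hs_A hs_AT hs_I
    (0 : 'M[R]_(d, 0)) (0 : 'M[R]_(0, 0)) (0 : 'M[R]_(0, 0)) (0 : 'M[R]_(0, d)).

Lemma attn_layerE {K d : nat} (hs_A hs_AT hs_I : seq (Defs.head R d))
    (X : 'M[R]_(K, d)) A :
  layer_apply (attn_layer hs_A hs_AT hs_I) X A = f_attn (attn_layer hs_A hs_AT hs_I) X A.
Proof. by rewrite /layer_apply /f_mlp /= mulmx0 add0r. Qed.

Definition score {K d : nat} (h : Defs.head R d) (X : 'M[R]_(K, d)) : 'M[R]_K :=
  X *m WQ h *m (WK h)^T *m X^T.

Lemma scoreE {K d : nat} (h : Defs.head R d) (X : 'M[R]_(K, d)) k j :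
  score h X k j = (X *m WQ h) k 0 * (X *m WK h) j 0 + (X *m WQ h) k 1 * (X *m WK h) j 1.
Proof. by rewrite /score -mulmxA -trmx_mul mulmx_trmx2E. Qed.

Lemma padded_inc_row0 {K : nat} (H : whypergraph R) (i j : 'I_K) :
  i = 0%N :> nat -> padded_inc K H i j = 0.
Proof. by rewrite mxE => ->. Qed.

Lemma padded_inc_col0 {K : nat} (H : whypergraph R) (i j : 'I_K) :
  j = 0%N :> nat -> padded_inc K H i j = 0.
Proof. by rewrite mxE => ->; case: (nat_of_ord i). Qed.

End Layers.

Section GatherErase.
Context {R : realType} {K d : nat}.
Variables (delta : R) (Bg P1 P2 Pc1 Pc2 D : 'I_d) (C : 'I_K).

Definition pos_proj : 'M[R]_(d, 2) := delta_mx P1 0 + delta_mx P2 1.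

Definition gather_head : Defs.head R d :=
  Head pos_proj (pos_proj + delta_mx Pc1 0 + delta_mx Pc2 1) (2%:R *: delta_mx Bg D).

Definition erase_head : Defs.head R d :=
  Head (pos_proj + delta_mx Bg 1) (pos_proj + delta_mx Bg 1) (- delta_mx D D).

Hypotheses (delta_gt0 : 0 < delta) (K_delta_lt : K.-1%:R * delta < 2 * pi)
  (C_gt0 : (0 < C)%N).

Let ang (j : nat) := j%:R * delta.

Definition key_pos (j : 'I_K) : nat := if j == 0%N :> nat then C else j.

Let top : 'I_K := Ordinal (ltn_trans C_gt0 (ltn_ord C)).

Section Entries.
Variable X : 'M[R]_(K, d).
Hypotheses (X_Bg : global_col X Bg) (X_P : pos_cols delta X P1 P2)
  (X_Pc1 : scalar_col X Pc1 (pos delta C).1) (X_Pc2 : scalar_col X Pc2 (pos delta C).2).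

Lemma pos_projE (k : 'I_K) :
  (X *m pos_proj) k 0 = (if k == 0%N :> nat then 0 else sin (ang k)) /\
  (X *m pos_proj) k 1 = (if k == 0%N :> nat then 0 else cos (ang k)).
Proof.
rewrite mulmxDr !addmxE !mulmx_deltaE /= (X_P k).1 (X_P k).2 pos_sin_cos /=.
by rewrite addr0 add0r.
Qed.

Lemma gather_queryE {k : 'I_K} : k != 0%N :> nat ->
  (X *m WQ gather_head) k 0 = sin (ang k) /\ (X *m WQ gather_head) k 1 = cos (ang k).
Proof. by move=> /negbTE k0; rewrite /= (pos_projE k).1 (pos_projE k).2 k0. Qed.

Lemma gather_keyE (j : 'I_K) :
  (X *m WK gather_head) j 0 = sin (ang (key_pos j)) /\
  (X *m WK gather_head) j 1 = cos (ang (key_pos j)).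
Proof.
rewrite /= 2!mulmxDr !addmxE !mulmx_deltaE /= (pos_projE j).1 (pos_projE j).2.
rewrite X_Pc1 X_Pc2 pos_sin_cos /key_pos.
by case: eqP => _ /=; rewrite !(addr0, add0r).
Qed.

Lemma erase_keyE (j : 'I_K) :
  (X *m WK erase_head) j 0 = sin (ang j) /\ (X *m WK erase_head) j 1 = cos (ang j).
Proof.
rewrite /= mulmxDr !addmxE !mulmx_deltaE /= (pos_projE j).1 (pos_projE j).2 X_Bg.
by rewrite /ang; case: eqP => [->|_]; rewrite ?mul0r ?sin0 ?cos0; split; ring.
Qed.

Lemma gather_scoreE (k j : 'I_K) : k != 0%N :> nat ->
  score gather_head X k j = cos (ang k - ang (key_pos j)).
Proof.
move=> k0; rewrite scoreE (gather_queryE k0).1 (gather_queryE k0).2.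
by rewrite (gather_keyE j).1 (gather_keyE j).2 sin_cos_dot.
Qed.

Lemma erase_scoreE (k j : 'I_K) : score erase_head X k j = cos (ang k - ang j).
Proof.
rewrite scoreE; have -> : WQ erase_head = WK erase_head by [].
rewrite (erase_keyE k).1 (erase_keyE k).2 (erase_keyE j).1 (erase_keyE j).2.
exact: sin_cos_dot.
Qed.

Lemma hardmax_erase : hardmax (score erase_head X) = 1%:M.
Proof.
apply: hardmax_diag_max => i j ne_ij; rewrite !erase_scoreE subrr cos0.
by apply: (cos_natmulB_lt1 K) => //; rewrite eq_sym.
Qed.

Lemma hardmax_gatherE (k j : 'I_K) : k != 0%N :> nat ->
  hardmax (score gather_head X) k j =
  if key_pos j == k then #|[set l | key_pos l == k]|%:R^-1 else 0.
Proof.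
move=> k0; rewrite (@hardmax_rowE _ _ _ k [set l | key_pos l == k]%SET 1) ?inE //.
- by apply/set0Pn; exists k; rewrite inE /key_pos (negbTE k0).
- by move=> l; rewrite inE => /eqP kl; rewrite gather_scoreE // kl subrr cos0.
- move=> l; rewrite inE => ne_lk; rewrite gather_scoreE //.
  apply: (cos_natmulB_lt1 K) => //; last by rewrite eq_sym.
  by rewrite /key_pos; case: eqP.
Qed.

Lemma gather_keys_atC : [set l | key_pos l == C] = [set top; C]%SET.
Proof.
apply/setP => l; rewrite !inE /key_pos.
case: (eqVneq (l : nat) 0%N) => [l0|l0].
- have -> : l = top by exact: val_inj.
  by rewrite !eqxx.
- have /negbTE -> : l != top by apply: contraNneq l0 => ->.
  by rewrite val_eqE.
Qed.

Lemma gather_attnE (k : 'I_K) c : k != 0%N :> nat ->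
  (hardmax (score gather_head X) *m X *m WV gather_head) k c =
  if c == D then (k == C)%:R else 0.
Proof.
move=> k0; rewrite [WV _]/= -scalemxAr mxE mulmx_deltaE.
case: eqP => _; last by rewrite mulr0.
have -> : (hardmax (score gather_head X) *m X) k Bg = hardmax (score gather_head X) k top.
  rewrite mxE (bigD1 top) //= X_Bg /= mulr1 big1 ?addr0 // => j ne_jtop.
  rewrite X_Bg; case: eqP => [j0|_]; last by rewrite mulr0.
  have j_top : j = top by exact: val_inj.
  by rewrite j_top eqxx in ne_jtop.
rewrite hardmax_gatherE //= val_eqE.
have [->|_] := eqVneq k C; last by rewrite mulr0.
have top_neC : top != C by apply/eqP => /(congr1 val) /= C0; move: C_gt0; rewrite -C0.
by rewrite gather_keys_atC cards2 top_neC mulfV // pnatr_eq0.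
Qed.

(* Row 0 has query 0, hence attends uniformly: the first column of B must kill it. *)
Lemma psi_gatherE (B : 'M[R]_K) : (forall i (k : 'I_K), k = 0%N :> nat -> B i k = 0) ->
  forall i c, psi gather_head X B i c = if c == D then B i C else 0.
Proof.
move=> B_col0 i c.
have -> : psi gather_head X B = B *m (hardmax (score gather_head X) *m X *m WV gather_head).
  by rewrite /psi !mulmxA.
rewrite mxE (bigD1 C) //= gather_attnE -?lt0n // big1 => [|k ne_kC].
  by rewrite eqxx addr0; case: eqP; rewrite ?mulr1 ?mulr0.
have [k0|k0] := eqVneq (k : nat) 0%N; first by rewrite B_col0 ?mul0r.
by rewrite gather_attnE // (negbTE ne_kC); case: eqP; rewrite mulr0.
Qed.

Lemma psi_eraseE i c : psi erase_head X 1%:M i c = if c == D then - X i D else 0.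
Proof.
rewrite /psi hardmax_erase !mul1mx mulmxN mxE mulmx_deltaE.
by case: eqP; rewrite ?oppr0.
Qed.

Lemma gather_erase_set_col (B : 'M[R]_K) :
  (forall i (k : 'I_K), k = 0%N :> nat -> B i k = 0) ->
  psi gather_head X B + psi erase_head X 1%:M + X = set_col X D (fun i => B i C).
Proof.
move=> B_col0; apply/matrixP => i c.
rewrite !addmxE psi_gatherE // psi_eraseE mxE.
by case: eqP => [->|_]; rewrite ?subrK ?add0r.
Qed.

End Entries.

Definition read_row_layer : layer R d := attn_layer [::] [:: gather_head] [:: erase_head].

Definition read_col_layer : layer R d := attn_layer [:: gather_head] [::] [:: erase_head].

Lemma read_row_layerE X (H : whypergraph R) :
  global_col X Bg -> pos_cols delta X P1 P2 ->
  scalar_col X Pc1 (pos delta C).1 -> scalar_col X Pc2 (pos delta C).2 ->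
  layer_apply read_row_layer X (padded_inc K H) = set_col X D (fun i => padded_inc K H C i).
Proof.
move=> X_Bg X_P X_Pc1 X_Pc2.
rewrite attn_layerE /f_attn /= big_nil big_seq1 big_seq1 add0r.
rewrite (@gather_erase_set_col X X_Bg X_P X_Pc1 X_Pc2 (padded_inc K H)^T).
  by apply/matrixP => i j; rewrite !mxE.
by move=> i k k0; rewrite mxE padded_inc_row0.
Qed.

Lemma read_col_layerE X (H : whypergraph R) :
  global_col X Bg -> pos_cols delta X P1 P2 ->
  scalar_col X Pc1 (pos delta C).1 -> scalar_col X Pc2 (pos delta C).2 ->
  layer_apply read_col_layer X (padded_inc K H) = set_col X D (fun i => padded_inc K H i C).
Proof.
move=> X_Bg X_P X_Pc1 X_Pc2.
rewrite attn_layerE /f_attn /= big_nil big_seq1 big_seq1 addr0.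
by rewrite gather_erase_set_col // => i k k0; rewrite padded_inc_col0.
Qed.

End GatherErase.

Theorem lemmaC7 (R : realType) (K d : nat) (delta : R)
  (Bg Bl P1 P2 Pc1 Pc2 D : 'I_d) (C : 'I_K) :
  0 < delta -> (K.-1)%:R * delta < 2 * pi ->
  uniq [:: Bg; Bl; P1; P2; Pc1; Pc2; D] ->
  (0 < nat_of_ord C)%N ->
  let conv (X : 'M[R]_(K, d)) :=
    [/\ global_col X Bg, local_col X Bl, pos_cols delta X P1 P2,
        scalar_col X Pc1 (pos delta C).1 & scalar_col X Pc2 (pos delta C).2] in
  (* (1) reading row C of Atilde into column D *)
  (exists L : layer R d,
     forall (X : 'M[R]_(K, d)) (H : whypergraph R),
       (maxn (nv H) (ne H) < K)%N -> conv X ->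
       layer_apply L X (padded_inc K H) = set_col X D (fun i => padded_inc K H C i))
  /\
  (* (2) reading column C of Atilde into column D *)
  (exists L : layer R d,
     forall (X : 'M[R]_(K, d)) (H : whypergraph R),
       (maxn (nv H) (ne H) < K)%N -> conv X ->
       layer_apply L X (padded_inc K H) = set_col X D (fun i => padded_inc K H i C)).
Proof.
move=> delta_gt0 K_delta_lt _ C_gt0 conv; split.
- exists (read_row_layer Bg P1 P2 Pc1 Pc2 D) => X H _ [X_Bg _ X_P X_Pc1 X_Pc2].
  exact: (read_row_layerE delta).
- exists (read_col_layer Bg P1 P2 Pc1 Pc2 D) => X H _ [X_Bg _ X_P X_Pc1 X_Pc2].
  exact: (read_col_layerE delta).
Qed.
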